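(* Let $k$ be a field, $A=kQ_A/I_A$ an indecomposable finite-dimensional monomial algebra with vertices $e_1,\dots,e_n$, and $B$ the algebra obtained from $A$ by gluing the distinct non-isolated vertices $e_1$ and $e_n$. Then there is an algebra monomorphism $Z(A)\hookrightarrow Z(B)$, and $\dim_kZ(B)=\dim_kZ(A)+\mathrm{nsp}(1,n)$.
   Context: Monomial: $A=kQ_A/I_A$, $Q_A$ a finite quiver, $I_A$ admissible, generated by a minimal set $Z_A$ of paths of length $\ge2$; $\mathcal B_A$ is the set of paths (including trivial ones) not containing an element of $Z_A$ as a subpath, a basis of $A$. Gluing: $B$ is the subalgebra of $A$ generated by $f_1=e_1+e_n$, $f_i=e_i$ ($2\le i\le n-1$) and all arrows ($B\cong kQ_B/I_B$, $Q_B$ obtained by identifying $e_1,e_n$, $I_B$ generated by $I_A$ and all newly formed length-2 paths through the new vertex). $Z(\cdot)$ denotes the center. A non-special path is a path $p\in\mathcal B_A$ either from $e_1$ to $e_n$ or from $e_n$ to $e_1$ such that $ap\in I_A$ and $pb\in I_A$ for all arrows $a,b$ of $Q_A$; $\mathrm{nsp}(1,n)$ is the number of non-special paths. *)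

From HB Require Import structures.
From mathcomp Require Import all_boot all_order all_algebra.
Set Implicit Arguments.
Unset Strict Implicit.
Unset Printing Implicit Defensive.
Import GRing.Theory.
Local Open Scope ring_scope.

(* A path is a start vertex together with the sequence of its arrows, read   *)
(* in the order of traversal; trivial path e_v = (v, [::]).                  *)
Section Monomial.
Variables (V Ar : finType) (s t : Ar -> V).

Definition qpath : Type := (V * seq Ar)%type.

Fixpoint chain (v : V) (p : seq Ar) : bool :=
  if p is a :: p' then (s a == v) && chain (t a) p' else true.

Definition valid (p : qpath) : bool := chain p.1 p.2.
Definition pstart (p : qpath) : V := p.1.
Definition pend (p : qpath) : V := last p.1 (map t p.2).
Definition plen (p : qpath) : nat := size p.2.
Definition pcat (p q : qpath) : qpath := (p.1, p.2 ++ q.2).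
Definition arrow_path (a : Ar) : qpath := (s a, [:: a]).

(* Z is a minimal set of paths of length >= 2 (the generators Z_A of I_A). *)
Definition relation_set (Z : seq (seq Ar)) : Prop :=
  uniq Z /\
  (forall z, z \in Z -> (2 <= size z)%N /\ exists v, chain v z) /\
  (forall z z', z \in Z -> z' \in Z -> z != z' -> ~~ infix z z').

Variable Z : seq (seq Ar).

Definition avoidsZ (p : qpath) : bool := all (fun z => ~~ infix z p.2) Z.
Definition inBA (p : qpath) : bool := valid p && avoidsZ p.

(* N bounds the lengths of paths not in I: every path of length N lies in I.
   Together with lengths >= 2 of Z this is admissibility of I, and it says
   that A is finite-dimensional. *)
Definition fin_bound (N : nat) : Prop :=
  forall p : qpath, valid p -> plen p = N -> ~~ avoidsZ p.

Fixpoint words (l : nat) : seq (seq Ar) :=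
  if l is l'.+1 then [seq a :: x | a <- enum Ar, x <- words l'] else [:: [::]].

(* Enumeration of B_A (complete when fin_bound N holds). *)
Definition basis (N : nat) : seq qpath :=
  [seq p <- [seq (v, x) | v <- enum V, x <- flatten [seq words l | l <- iota 0 N]]
  | inBA p].

(* product of two paths in A: Some (pq) if pq is a nonzero basis path, else None (= 0) *)
Definition prodpath (p q : qpath) : option qpath :=
  if (pend p == pstart q) && inBA (pcat p q) then Some (pcat p q) else None.

Variables (K : fieldType) (N : nat).
Local Notation d := (size (basis N)).
(* elements of A = coordinate row vectors w.r.t. the basis B_A *)
Definition bpath (i : 'I_d) : qpath := tnth (in_tuple (basis N)) i.

Definition bvec (r : option qpath) : 'rV[K]_d :=
  \row_i (if Some (bpath i) == r then 1 else 0).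

Definition mmul (x y : 'rV[K]_d) : 'rV[K]_d :=
  \sum_(i < d) \sum_(j < d) (x 0 i * y 0 j) *: bvec (prodpath (bpath i) (bpath j)).

Definition munit : 'rV[K]_d :=
  \row_i (if (bpath i).2 == [::] then 1 else 0).

Definition central (x : 'rV[K]_d) : Prop := forall y, mmul x y = mmul y x.

(* dim_k Z(A): the kernel of x |-> (x e_j - e_j x)_j *)
Definition commf (x : 'rV[K]_d) : 'rV[K]_(d * d) :=
  mxvec (\matrix_(j < d) (mmul x (delta_mx 0 j) - mmul (delta_mx 0 j) x)).

Definition centre_dim : nat := \rank (kermx (lin1_mx commf)).

Definition indecomposable : Prop :=
  forall x, central x -> mmul x x = x -> x = 0 \/ x = munit.

Definition nsp (u w : V) : nat :=
  count (fun p => (((pstart p == u) && (pend p == w)) || ((pstart p == w) && (pend p == u)))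
                  && [forall a : Ar, prodpath (arrow_path a) p == None]
                  && [forall b : Ar, prodpath p (arrow_path b) == None])
        (basis N).

End Monomial.
Arguments mmul {V Ar} s t Z K N x y.
Arguments central {V Ar} s t Z K N x.
Arguments commf {V Ar} s t Z K N x.

Definition non_isolated (V Ar : finType) (s t : Ar -> V) (v : V) : Prop :=
  exists a : Ar, (s a == v) || (t a == v).

Definition centre_alg_mono (K : fieldType) (dA dB : nat)
  (mulA : 'rV[K]_dA -> 'rV[K]_dA -> 'rV[K]_dA) (oneA : 'rV[K]_dA)
  (mulB : 'rV[K]_dB -> 'rV[K]_dB -> 'rV[K]_dB) (oneB : 'rV[K]_dB)
  (f : 'rV[K]_dA -> 'rV[K]_dB) : Prop :=
  let cA x := forall y, mulA x y = mulA y x in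
  let cB x := forall y, mulB x y = mulB y x in
  [/\ forall x, cA x -> cB (f x),
      forall (a : K) x y, cA x -> cA y -> f (a *: x + y) = a *: f x + f y,
      forall x y, cA x -> cA y -> f (mulA x y) = mulB (f x) (f y),
      f oneA = oneB
    & forall x y, cA x -> cA y -> f x = f y -> x = y].

(* Gluing the distinct vertices u (= e_1) and w (= e_n): B = kQ_B/I_B.       *)
Section Glue.
Variables (V Ar : finType) (s t : Ar -> V) (u w : V) (huw : u != w).

Definition glueV (v : V) : {x : V | x != w} :=
  insubd (exist (fun x => x != w) u huw) v.

Definition sB (a : Ar) : {x : V | x != w} := glueV (s a).
Definition tB (a : Ar) : {x : V | x != w} := glueV (t a).

(* I_B is generated by Z_A and all newly formed length-2 paths *)
Definition ZB (Z : seq (seq Ar)) : seq (seq Ar) :=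
  Z ++ [seq [:: x.1; x.2] | x <- [seq (a, b) | a <- enum Ar, b <- enum Ar]
                          & (tB x.1 == sB x.2) && (t x.1 != s x.2)].
End Glue.

From HB Require Import structures.
From mathcomp Require Import all_boot all_order all_algebra.
From mathcomp Require Import ring zify.
Set Implicit Arguments.
Unset Strict Implicit.
Unset Printing Implicit Defensive.
Import GRing.Theory.
Local Open Scope ring_scope.

(* In the bases of paths, the product of A (and of B) is the convolution of
   coefficient functions along the factorisations of a path, and an element is
   central iff its coefficient function commutes with all others.  Since A is
   indecomposable, a central element of A has equal coefficients at the glued
   vertices e_u and e_w (the vertex function v |-> c(e_v) is constant along
   paths, and each of its level sets gives a central idempotent), so it
   survives the gluing as a central element of B: this is the monomorphism.
   Conversely, pull a central element y of B back to A along the gluing of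
   paths.  A path with distinct end points that carries a nonzero coefficient
   of y must join e_u and e_w, since these are glued, and cannot be extended
   by an arrow on either side, since y commutes with that arrow in B: it is
   non-special.  Deleting the non-special part of y leaves a central element
   of A, while every combination of non-special paths becomes central in B,
   where it is a loop annihilated by all arrows.  Hence
   Z(B) ~ Z(A) + span(non-special paths). *)

Section Coordinates.
Variables (T : eqType) (K : fieldType) (bs : seq T).
Local Notation d := (size bs).
Local Notation bnth := (tnth (in_tuple bs)).

Definition row_of (c : T -> K) : 'rV[K]_d := \row_i c (bnth i).

Definition coord (x : 'rV[K]_d) (p : T) : K := \sum_i x 0 i * (bnth i == p)%:R.

Lemma coord_notin x p : p \notin bs -> coord x p = 0.
Proof.
move=> pNbs; rewrite /coord big1 // => i _.
by case: eqP => [pE|]; rewrite ?mulr0 //; move: pNbs; rewrite -pE mem_tnth.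
Qed.

Lemma coordB x y p : coord (x - y) p = coord x p - coord y p.
Proof. by rewrite /coord -sumrB; apply: eq_bigr => i _; rewrite !mxE mulrBl. Qed.

Lemma coordP a x y p : coord (a *: x + y) p = a * coord x p + coord y p.
Proof.
rewrite /coord mulr_sumr -big_split; apply: eq_bigr => i _.
by rewrite !mxE mulrDl mulrA.
Qed.

Lemma coord0 p : coord 0 p = 0.
Proof. by rewrite /coord big1 // => i _; rewrite mxE mul0r. Qed.

Lemma row_ofP a c c' : row_of (fun p => a * c p + c' p) = a *: row_of c + row_of c'.
Proof. by apply/rowP => i; rewrite !mxE. Qed.

Lemma eq_row_of c c' : {in bs, c =1 c'} -> row_of c = row_of c'.
Proof. by move=> eq_c; apply/rowP => i; rewrite !mxE eq_c ?mem_tnth. Qed.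

Hypothesis uniq_bs : uniq bs.

Lemma coord_tnth x i : coord x (bnth i) = x 0 i.
Proof.
rewrite /coord (bigD1 i) //= eqxx mulr1 big1 ?addr0 // => j /negbTE neq_ji.
by rewrite (inj_eq (tuple_uniqP (in_tuple bs) uniq_bs)) neq_ji mulr0.
Qed.

Lemma coord_row_of c : {in bs, coord (row_of c) =1 c}.
Proof. by move=> p /(tnthP (in_tuple bs)) [i ->]; rewrite coord_tnth mxE. Qed.

Lemma coordK : cancel coord row_of.
Proof. by move=> x; apply/rowP => i; rewrite mxE coord_tnth. Qed.

Lemma row_of_inj c c' : row_of c = row_of c' -> {in bs, c =1 c'}.
Proof.
by move=> eq_c p p_bs; rewrite -(coord_row_of c p_bs) -(coord_row_of c' p_bs) eq_c.
Qed.

Lemma eq_coord x y : {in bs, coord x =1 coord y} -> x = y.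
Proof. by move=> eq_xy; rewrite -(coordK x) -(coordK y); apply: eq_row_of. Qed.

End Coordinates.

Lemma mul_rV_lin1E (K : fieldType) m n (f : 'rV[K]_m -> 'rV[K]_n) :
  (forall a x y, f (a *: x + y) = a *: f x + f y) -> forall x, x *m lin1_mx f = f x.
Proof.
move=> fP x; rewrite mulmx_sum_row {2}(row_sum_delta x).
have f0 : f 0 = 0 by have := fP (-1) 0 0; rewrite scaler0 addr0 scaleN1r addNr.
elim/big_rec2: _ => [|j y1 y2 _ ->]; first by rewrite f0.
by rewrite fP; congr (_ *: _ + _); apply/rowP => i; rewrite !mxE.
Qed.

Section PathBasis.
Variables (V Ar : finType) (s t : Ar -> V) (Z : seq (seq Ar)).
Local Notation qp := (qpath V Ar).
Local Notation inBA := (inBA s t Z).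

Lemma chain_cat v x y :
  chain s t v (x ++ y) = chain s t v x && chain s t (last v (map t x)) y.
Proof. by elim: x v => [|a x IHx] v //=; rewrite IHx andbA. Qed.

Lemma avoidsZ_infix (p q : qp) : infix p.2 q.2 -> avoidsZ Z q -> avoidsZ Z p.
Proof.
move=> pq /allP avoid_q; apply/allP => z /avoid_q; apply: contra => zp.
exact: infix_trans zp pq.
Qed.

Definition ptake (r : qp) k : qp := (r.1, take k r.2).
Definition pdrop (r : qp) k : qp := (pend t (ptake r k), drop k r.2).

Lemma inBA_ptake r k : inBA r -> inBA (ptake r k).
Proof.
case/andP => valid_r avoid_r; apply/andP; split.
  by move: valid_r; rewrite /valid -(cat_take_drop k r.2) chain_cat => /andP[].
by apply: avoidsZ_infix avoid_r; exact: prefixW (prefix_take _ _).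
Qed.

Lemma inBA_pdrop r k : inBA r -> inBA (pdrop r k).
Proof.
case/andP => valid_r avoid_r; apply/andP; split.
  by move: valid_r; rewrite /valid -(cat_take_drop k r.2) chain_cat => /andP[].
by apply: avoidsZ_infix avoid_r; exact: suffixW (suffix_drop _ _).
Qed.

Lemma prodpath_ptake_pdrop r k : inBA r -> prodpath s t Z (ptake r k) (pdrop r k) = Some r.
Proof.
by move=> r_in; rewrite /prodpath eqxx /pcat /= cat_take_drop; case: r r_in => /= ? ? ->.
Qed.

Lemma prodpathP p q r : prodpath s t Z p q = Some r ->
  [/\ inBA r, r = pcat p q & pend t p = pstart q].
Proof. by rewrite /prodpath; case: ifP => // /andP[/eqP pq r_in] [<-]. Qed.

Lemma prodpath_split p q r : prodpath s t Z p q = Some r ->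
  [/\ (size p.2 <= size r.2)%N, p = ptake r (size p.2) & q = pdrop r (size p.2)].
Proof.
case/prodpathP => _ ->; case: p q => v x [v' y] /= pq.
rewrite /ptake /pdrop /= size_cat leq_addr take_size_cat ?drop_size_cat //.
by rewrite /ptake /= take_size_cat // pq.
Qed.

Lemma pend_pdrop r k : pend t (pdrop r k) = pend t r.
Proof.
by rewrite /pend /pdrop /ptake /= -[in RHS](cat_take_drop k r.2) map_cat last_cat.
Qed.

Lemma ptake0 r : ptake r 0 = (r.1, [::]).
Proof. by rewrite /ptake take0. Qed.

Lemma pdrop0 r : pdrop r 0 = r.
Proof. by rewrite /pdrop ptake0 drop0; case: r. Qed.

Lemma ptake_size r : ptake r (size r.2) = r.
Proof. by case: r => v x; rewrite /ptake /= take_size. Qed.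

Lemma pdrop_size r : pdrop r (size r.2) = (pend t r, [::]).
Proof. by rewrite /pdrop ptake_size drop_size. Qed.

Lemma mem_words l x : (x \in words Ar l) = (size x == l).
Proof.
elim: l x => [|l IHl] [|a x] //=.
  by apply/negbTE/allpairsP => -[[b y] [_ _]].
apply/allpairsP/eqP => [[[b y] /= [_ y_in [_ ->]]]|[size_x]].
  by move: y_in; rewrite IHl => /eqP ->.
by exists (a, x); rewrite /= mem_enum IHl size_x.
Qed.

Lemma uniq_words l : uniq (words Ar l).
Proof.
elim: l => //= l IHl; apply: allpairs_uniq => //; first exact: enum_uniq.
by move=> [a x] [b y] _ _ /= [-> ->].
Qed.

Lemma mem_words_lt n x : (x \in flatten [seq words Ar l | l <- iota 0 n]) = (size x < n)%N.
Proof.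
apply/flattenP/idP => [[ws /mapP [l]]|lt_x_n].
  by rewrite mem_iota => /andP[_ lt_l_n] ->; rewrite mem_words => /eqP ->.
exists (words Ar (size x)); last by rewrite mem_words.
by apply/mapP; exists (size x); rewrite ?mem_iota.
Qed.

Lemma uniq_words_lt n : uniq (flatten [seq words Ar l | l <- iota 0 n]).
Proof.
elim: n => // n IHn; rewrite -addn1 iotaD map_cat flatten_cat cat_uniq IHn /=.
rewrite cats0 uniq_words andbT; apply/hasPn => x.
by rewrite mem_words add0n mem_words_lt => /eqP ->; rewrite ltnn.
Qed.

Lemma inBA_trivial v : (forall z, z \in Z -> 2 <= size z)%N -> inBA (v, [::]).
Proof. by move=> Z_ge2; apply/allP => z /Z_ge2; rewrite infixs0; case: z. Qed.

Variable N : nat.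
Local Notation bs := (basis s t Z N).

Lemma uniq_basis : uniq bs.
Proof.
apply/filter_uniq/allpairs_uniq; [exact: enum_uniq|exact: uniq_words_lt|].
by move=> [a x] [b y] _ _ /= [-> ->].
Qed.

Hypothesis fin_bound_N : fin_bound s t Z N.

Lemma inBA_size_lt p : inBA p -> (size p.2 < N)%N.
Proof.
move=> p_in; rewrite ltnNge; apply/negP => le_N_p.
case/andP: (inBA_ptake N p_in) => valid_pN.
exact/negP/fin_bound_N/(size_takel le_N_p).
Qed.

Lemma mem_basis p : (p \in bs) = inBA p.
Proof.
rewrite mem_filter; case p_in: (inBA p) => //=.
apply/allpairsP; exists (p.1, p.2).
by rewrite mem_enum mem_words_lt inBA_size_lt //; case: p {p_in}.
Qed.

End PathBasis.

Section Convolution.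
Variables (V Ar : finType) (s t : Ar -> V) (Z : seq (seq Ar)) (K : fieldType).
Local Notation qp := (qpath V Ar).
Local Notation inBA := (inBA s t Z).
Implicit Types (c d : qp -> K) (r : qp).

(* The coefficient at [r] of the product in kQ of the elements with
   coefficient functions [c] and [d]. *)
Definition pconv c d r : K :=
  \sum_(0 <= k < (size r.2).+1) c (ptake r k) * d (pdrop t r k).

Definition pdelta r : qp -> K := fun q => (q == r)%:R.
Definition parrow (a : Ar) : qp -> K := fun q => (q.2 == [:: a])%:R.

Definition pcentral c := forall d r, inBA r -> pconv c d r = pconv d c r.

Lemma eq_pconv c c' d d' : c =1 c' -> d =1 d' -> pconv c d =1 pconv c' d'.
Proof. by move=> eq_c eq_d r; apply: eq_bigr => k _; rewrite eq_c eq_d. Qed.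

Lemma eq_pconv_in c c' d d' r : inBA r ->
  (forall p, inBA p -> c p = c' p) -> (forall p, inBA p -> d p = d' p) ->
  pconv c d r = pconv c' d' r.
Proof.
move=> r_in eq_c eq_d; apply: eq_bigr => k _.
by rewrite eq_c ?eq_d ?inBA_ptake ?inBA_pdrop.
Qed.

Lemma pcentral_in c c' : (forall p, inBA p -> c p = c' p) -> pcentral c' -> pcentral c.
Proof.
move=> eq_c c'_central d r r_in.
rewrite (eq_pconv_in (c' := c') (d' := d) r_in) // c'_central //.
by apply: eq_pconv_in => // p /eq_c.
Qed.

Lemma pconvDl a c c' d r :
  pconv (fun p => a * c p + c' p) d r = a * pconv c d r + pconv c' d r.
Proof.
rewrite /pconv mulr_sumr -big_split; apply: eq_bigr => k _.
by rewrite mulrDl mulrA.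
Qed.

Lemma pconvDr a c d d' r :
  pconv c (fun p => a * d p + d' p) r = a * pconv c d r + pconv c d' r.
Proof.
rewrite /pconv mulr_sumr -big_split; apply: eq_bigr => k _.
by rewrite mulrDr !mulrA [a * _]mulrC.
Qed.

Lemma pconv_only i c d r : (i <= size r.2)%N ->
  (forall k, (k <= size r.2)%N -> k != i -> c (ptake r k) * d (pdrop t r k) = 0) ->
  pconv c d r = c (ptake r i) * d (pdrop t r i).
Proof.
move=> le_i_r only_i; rewrite /pconv (bigD1_seq i) ?iota_uniq ?mem_index_iota //=.
rewrite big1_seq ?addr0 // => k /andP[neq_ki]; rewrite mem_index_iota ltnS.
by move=> /andP[_ le_k_r]; apply: only_i.
Qed.

Lemma pconv_eq0 c d r :
  (forall k, (k <= size r.2)%N -> c (ptake r k) * d (pdrop t r k) = 0) -> pconv c d r = 0.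
Proof.
move=> all0; rewrite /pconv big1_seq // => k /andP[_].
by rewrite mem_index_iota ltnS => /andP[_ /all0].
Qed.

Lemma size_ptake r k : (k <= size r.2)%N -> size (ptake r k).2 = k.
Proof. exact: size_takel. Qed.

Lemma size_pdrop r k : size (pdrop t r k).2 = (size r.2 - k)%N.
Proof. exact: size_drop. Qed.

Lemma pconv_trivl c d r : (forall p, p.2 != [::] -> c p = 0) ->
  pconv c d r = c (r.1, [::]) * d r.
Proof.
move=> c_triv; rewrite (pconv_only (i := 0%N)) ?ptake0 ?pdrop0 // => k le_k_r nz_k.
by rewrite c_triv ?mul0r // -size_eq0 size_ptake.
Qed.

Lemma pconv_trivr c d r : (forall p, p.2 != [::] -> c p = 0) ->
  pconv d c r = d r * c (pend t r, [::]).
Proof.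
move=> c_triv; rewrite (pconv_only (i := size r.2)) ?ptake_size ?pdrop_size //.
by move=> k le_k_r neq_k; rewrite [c _]c_triv ?mulr0 // -size_eq0 size_pdrop; lia.
Qed.

Lemma pconv_deltar c r : pconv c (pdelta r) r = c (r.1, [::]).
Proof.
rewrite /pdelta.
rewrite (pconv_only (i := 0%N)) ?ptake0 ?pdrop0 ?eqxx ?mulr1 // => k le_k_r nz_k.
by case: eqP => [/(congr1 (size \o snd))|]; rewrite ?mulr0 //= size_pdrop; lia.
Qed.

Lemma pconv_deltal c r : pconv (pdelta r) c r = c (pend t r, [::]).
Proof.
rewrite /pdelta.
rewrite (pconv_only (i := size r.2)) ?ptake_size ?pdrop_size ?eqxx ?mul1r //.
move=> k le_k_r neq_k.
by case: eqP => [/(congr1 (size \o snd))|]; rewrite ?mul0r //= size_ptake //; lia.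
Qed.

Lemma pconv_vertexl c v r : pconv (pdelta (v, [::])) c r = (r.1 == v)%:R * c r.
Proof.
rewrite pconv_trivl /pdelta ?xpair_eqE ?eqxx ?andbT // => -[v' x] /= /negbTE.
by rewrite xpair_eqE eq_sym => ->; rewrite andbF.
Qed.

Lemma pconv_vertexr c v r : pconv c (pdelta (v, [::])) r = c r * (pend t r == v)%:R.
Proof.
rewrite pconv_trivr /pdelta ?xpair_eqE ?eqxx ?andbT // => -[v' x] /= /negbTE.
by rewrite xpair_eqE eq_sym => ->; rewrite andbF.
Qed.

Lemma pconv_arrowl_cons c a v x :
  pconv (parrow a) c (v, a :: x) = c (t a, x).
Proof.
rewrite /parrow.
rewrite (pconv_only (i := 1%N)) //=; last first.
  move=> [|[|k]] //= le_k_x _; first by rewrite mul0r.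
  by case: x le_k_x => // b x _; rewrite eqseq_cons /= andbF mul0r.
by rewrite take0 eqxx mul1r /pdrop /ptake /= take0 drop0.
Qed.

Lemma pconv_arrowr_rcons c b v x :
  pconv c (parrow b) (v, rcons x b) = c (v, x).
Proof.
rewrite /parrow.
rewrite (pconv_only (i := size x)) /= ?size_rcons //.
  by rewrite /ptake /= -cats1 drop_size_cat // take_size_cat // eqxx mulr1.
move=> k le_k_x neq_k; case: eqP; rewrite ?mulr0 // => /(congr1 size).
by rewrite size_drop size_rcons /=; lia.
Qed.

Lemma pconv_arrowr_eq0 c b r : pend t r != t b ->
  pconv c (parrow b) r = 0.
Proof.
rewrite /parrow.
move=> neq_end; apply: pconv_eq0 => k _; case: eqP; rewrite ?mulr0 // => drop_b.
by move: neq_end; rewrite -(pend_pdrop t r k) /pend drop_b eqxx.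
Qed.

Lemma pconv_arrowl_eq0 c a r : valid s t r -> r.1 != s a ->
  pconv (parrow a) c r = 0.
Proof.
rewrite /parrow.
move=> valid_r neq_start; apply: pconv_eq0 => k _; case: eqP; rewrite ?mul0r //= => take_a.
move: valid_r neq_start; rewrite /valid -(cat_take_drop k r.2) take_a /=.
by case/andP => /eqP ->; rewrite eqxx.
Qed.

End Convolution.
Arguments pdelta {V Ar K} r _.
Arguments parrow {V Ar K} a _.

Section MaximalPaths.
Variables (V Ar : finType) (s t : Ar -> V) (Z : seq (seq Ar)) (K : fieldType).
Local Notation qp := (qpath V Ar).
Local Notation inBA := (inBA s t Z).
Local Notation prodpath := (prodpath s t Z).

Definition lmaximal (p : qp) := [forall a : Ar, prodpath (arrow_path s a) p == None].
Definition rmaximal (p : qp) := [forall b : Ar, prodpath p (arrow_path s b) == None].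

Lemma chain_nth v x k b0 : chain s t v x -> (k < size x)%N ->
  s (nth b0 x k) = last v (map t (take k x)).
Proof.
move=> chain_x lt_k_x; move: chain_x.
by rewrite -{1}(cat_take_drop k x) chain_cat (drop_nth b0 lt_k_x) /= => /and3P[_ /eqP].
Qed.

Lemma prodpath_ptake_arrow r k : inBA r -> (k < size r.2)%N ->
  exists b, prodpath (ptake r k) (arrow_path s b) = Some (ptake r k.+1).
Proof.
case: r => v x r_in /= lt_k_x; have b0 : Ar by case: x lt_k_x {r_in}.
exists (nth b0 x k); rewrite /prodpath /pcat /ptake /= cats1 -take_nth //.
have /andP[valid_r _] := r_in.
by rewrite (chain_nth b0 valid_r lt_k_x) eqxx (inBA_ptake k.+1 r_in).
Qed.

Lemma prodpath_arrow_pdrop r k : inBA r -> (k < size r.2)%N ->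
  exists a, prodpath (arrow_path s a) (pdrop t r k.+1) = Some (pdrop t r k).
Proof.
case: r => v x r_in /= lt_k_x; have b0 : Ar by case: x lt_k_x {r_in}.
have /andP[valid_r _] := r_in.
exists (nth b0 x k); rewrite /prodpath.
have -> : pcat (arrow_path s (nth b0 x k)) (pdrop t (v, x) k.+1) = pdrop t (v, x) k.
  by rewrite /pcat /pdrop /= (drop_nth b0 lt_k_x) (chain_nth b0 valid_r lt_k_x).
rewrite inBA_pdrop // andbT /pdrop /ptake /pend /=.
by rewrite (take_nth b0 lt_k_x) map_rcons last_rcons eqxx.
Qed.

Lemma pconv_rmaximal (c d : qp -> K) r :
  (forall p, c p != 0 -> rmaximal p) -> inBA r ->
  pconv t c d r = c r * d (pend t r, [::]).
Proof.
move=> supp_c r_in; rewrite (pconv_only (i := size r.2)) ?ptake_size ?pdrop_size //.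
move=> k le_k neq_k; have lt_k : (k < size r.2)%N by rewrite ltn_neqAle neq_k.
have [b ext] := prodpath_ptake_arrow r_in lt_k.
have [->|/supp_c] := eqVneq (c (ptake r k)) 0; first by rewrite mul0r.
by move/forallP/(_ b); rewrite ext.
Qed.

Lemma pconv_lmaximal (c d : qp -> K) r :
  (forall p, c p != 0 -> lmaximal p) -> inBA r ->
  pconv t d c r = d (r.1, [::]) * c r.
Proof.
move=> supp_c r_in; rewrite (pconv_only (i := 0%N)) ?ptake0 ?pdrop0 //.
case=> // k lt_k _; have [a ext] := prodpath_arrow_pdrop r_in lt_k.
have [->|/supp_c] := eqVneq (c (pdrop t r k.+1)) 0; first by rewrite mulr0.
by move/forallP/(_ a); rewrite ext.
Qed.

End MaximalPaths.

Section PathAlgebra.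
Variables (V Ar : finType) (s t : Ar -> V) (Z : seq (seq Ar)) (K : fieldType) (N : nat).
Hypothesis fin_bound_N : fin_bound s t Z N.
Local Notation qp := (qpath V Ar).
Local Notation inBA := (inBA s t Z).
Local Notation prodpath := (prodpath s t Z).
Local Notation bs := (basis s t Z N).
Local Notation mmul := (mmul s t Z K N).
Local Notation pconv := (pconv t).

Lemma prodpath_eq_some p q r : inBA r -> (prodpath p q == Some r) =
  [&& (size p.2 <= size r.2)%N, p == ptake r (size p.2) & q == pdrop t r (size p.2)].
Proof.
move=> r_in; apply/eqP/and3P => [/prodpath_split[-> /eqP-> /eqP->] //|].
by case=> _ /eqP p_pre /eqP ->; rewrite {1}p_pre prodpath_ptake_pdrop.
Qed.

Lemma sum_prodpath (F : qp -> qp -> K) r : inBA r ->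
  \sum_(p <- bs) \sum_(q <- bs) F p q * (Some r == prodpath p q)%:R
  = \sum_(0 <= k < (size r.2).+1) F (ptake r k) (pdrop t r k).
Proof.
move=> r_in.
pose prefix_r (p : qp) := (size p.2 <= size r.2)%N && (p == ptake r (size p.2)).
transitivity (\sum_(p <- bs | prefix_r p) F p (pdrop t r (size p.2))).
  rewrite [RHS]big_mkcond; apply: eq_bigr => p _.
  under eq_bigr => q _ do rewrite eq_sym prodpath_eq_some // andbA.
  rewrite /prefix_r; case: andP => _ /=; last by rewrite big1 // => q _; rewrite mulr0.
  have drop_in : pdrop t r (size p.2) \in bs by rewrite mem_basis ?inBA_pdrop.
  rewrite (bigD1_seq _ drop_in (uniq_basis s t Z N)) /= eqxx mulr1 big1 ?addr0 //.
  by move=> q /negbTE ->; rewrite mulr0.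
rewrite -big_filter (perm_big [seq ptake r k | k <- index_iota 0 (size r.2).+1]).
  rewrite big_map; apply: eq_big_seq => k; rewrite mem_index_iota ltnS.
  by case/andP=> _ le_k_r; rewrite size_ptake.
apply: uniq_perm; first exact/filter_uniq/uniq_basis.
  rewrite map_inj_in_uniq ?iota_uniq // => i j.
  rewrite !mem_index_iota !ltnS => /andP[_ le_i] /andP[_ le_j] /(congr1 (size \o snd)).
  by rewrite /= !size_ptake.
move=> p; rewrite mem_filter mem_basis //; apply/andP/mapP => [[/andP[le_p /eqP p_pre] _]|].
  by exists (size p.2); rewrite ?mem_index_iota ?ltnS.
case=> k; rewrite mem_index_iota ltnS => /andP[_ le_k] ->.
by rewrite inBA_ptake // /prefix_r size_ptake // le_k eqxx.
Qed.

Lemma mmulE x y : mmul x y = row_of bs (pconv (coord x) (coord y)).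
Proof.
apply/rowP => l; rewrite [RHS]mxE /pconv.
rewrite -(sum_prodpath (fun p q => coord x p * coord y q)); last first.
  by rewrite -(mem_basis fin_bound_N) mem_tnth.
rewrite [RHS]big_tnth summxE; apply: eq_bigr => i _.
rewrite [RHS]big_tnth summxE; apply: eq_bigr => j _.
by rewrite !mxE !coord_tnth ?uniq_basis //; case: eqP.
Qed.

Lemma mmulDl a x y z : mmul (a *: x + y) z = a *: mmul x z + mmul y z.
Proof.
rewrite !mmulE -row_ofP; apply: eq_row_of => r _.
by rewrite -pconvDl; apply: eq_pconv => // p; rewrite coordP.
Qed.

Lemma mmulDr a x y z : mmul z (a *: x + y) = a *: mmul z x + mmul z y.
Proof.
rewrite !mmulE -row_ofP; apply: eq_row_of => r _.
by rewrite -pconvDr; apply: eq_pconv => // p; rewrite coordP.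
Qed.

Lemma centralE x : central s t Z K N x <-> pcentral s t Z (coord x).
Proof.
have coord_row (d : qp -> K) p : inBA p -> coord (row_of bs d) p = d p.
  by move=> p_in; rewrite coord_row_of ?uniq_basis ?mem_basis.
split=> [x_central d r r_in|x_central y].
  have := x_central (row_of bs d); rewrite !mmulE.
  move=> /(row_of_inj (uniq_basis _ _ _ _))/(_ r).
  rewrite mem_basis // => /(_ r_in).
  by rewrite (eq_pconv_in r_in (fun _ _ => erefl) (coord_row d))
             (eq_pconv_in r_in (coord_row d) (fun _ _ => erefl)).
by rewrite !mmulE; apply: eq_row_of => r; rewrite mem_basis // => /x_central.
Qed.

Lemma mmul_sumr x y : mmul x y = \sum_j y 0 j *: mmul x (delta_mx 0 j).
Proof.
rewrite -(mul_rV_lin1E (f := mmul x)) => [|a u v]; last exact: mmulDr.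
rewrite mulmx_sum_row; apply: eq_bigr => j _; congr (_ *: _).
by apply/rowP => k; rewrite !mxE.
Qed.

Lemma mmul_suml x y : mmul y x = \sum_j y 0 j *: mmul (delta_mx 0 j) x.
Proof.
rewrite -(mul_rV_lin1E (f := mmul^~ x)) => [|a u v]; last exact: mmulDl.
rewrite mulmx_sum_row; apply: eq_bigr => j _; congr (_ *: _).
by apply/rowP => k; rewrite !mxE.
Qed.

Lemma commfP a x y :
  commf s t Z K N (a *: x + y) = a *: commf s t Z K N x + commf s t Z K N y.
Proof.
rewrite /commf -linearP; congr mxvec; apply/matrixP => j k.
by rewrite !mxE mmulDl mmulDr !mxE; ring.
Qed.

Lemma sub_kermx_commf x :
  (x <= kermx (lin1_mx (commf s t Z K N)))%MS <-> central s t Z K N x.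
Proof.
rewrite sub_kermx mul_rV_lin1E; last exact: commfP.
rewrite /commf mxvec_eq0; split=> [/eqP comm_x y|x_central].
  rewrite mmul_sumr mmul_suml; apply: eq_bigr => j _; congr (_ *: _).
  apply/rowP => k; have /rowP/(_ k) := congr1 (row j) comm_x.
  by rewrite !mxE => /eqP; rewrite subr_eq0 => /eqP.
by apply/eqP/matrixP => j k; rewrite !mxE x_central subrr.
Qed.

Lemma munitE : munit s t Z K N = row_of bs (fun p => (p.2 == [::])%:R).
Proof. by apply/rowP => i; rewrite !mxE; case: eqP. Qed.

End PathAlgebra.

Section Gluing.
Variables (V Ar : finType) (s t : Ar -> V) (Z : seq (seq Ar)) (u w : V) (huw : u != w).
Local Notation VB := {x : V | x != w}.
Local Notation sB := (sB s huw).
Local Notation tB := (tB t huw).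
Local Notation ZB := (ZB s t huw Z).
Local Notation glueV := (glueV huw).

Definition glue_path (p : qpath V Ar) : qpath VB Ar := (glueV p.1, p.2).

Definition unglue_path (q : qpath VB Ar) : qpath V Ar :=
  if q.2 is a :: _ then (s a, q.2) else (val q.1, [::]).

Lemma val_glueV x : val (glueV x) = if x != w then x else u.
Proof. by rewrite /glueV val_insubd. Qed.

Lemma glueV_uw : glueV u = glueV w.
Proof. by apply: val_inj; rewrite !val_glueV eqxx huw. Qed.

Lemma glueV_eq x y : glueV x = glueV y -> x != y ->
  (x == u) && (y == w) || (x == w) && (y == u).
Proof.
move=> /(congr1 val); rewrite !val_glueV.
by case: (eqVneq x w) => [->|_]; case: (eqVneq y w) => [->|_] //= ->; rewrite eqxx ?orbT.
Qed.

Lemma pend_glue p : pend tB (glue_path p) = glueV (pend t p).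
Proof. by rewrite /pend /= (map_comp glueV t) last_map. Qed.

Lemma pconv_glue (K : fieldType) (c d : qpath VB Ar -> K) r :
  pconv tB c d (glue_path r) = pconv t (c \o glue_path) (d \o glue_path) r.
Proof.
apply: eq_bigr => k _ /=; congr (_ * d _).
by rewrite /pdrop (_ : ptake (glue_path r) k = glue_path (ptake r k)) // pend_glue.
Qed.

Lemma chain_glue v x : chain s t v x -> chain sB tB (glueV v) x.
Proof. by elim: x v => [|a x IHx] v //= /andP[/eqP <- /IHx]; rewrite eqxx. Qed.

Lemma mem_ZB_pair a b :
  ([:: a; b] \in ZB) = ([:: a; b] \in Z) || (tB a == sB b) && (t a != s b).
Proof.
rewrite mem_cat; congr (_ || _); apply/mapP/idP => [[[a' b']]|ab_new].
  by rewrite mem_filter => /andP[ab_new _] [-> ->].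
exists (a, b); rewrite // mem_filter ab_new.
by apply/allpairsP; exists (a, b); rewrite !mem_enum.
Qed.

Lemma chain_infix_pair v x a b : chain s t v x -> infix [:: a; b] x -> t a = s b.
Proof.
move=> chain_x /infixP [y [z x_def]]; move: chain_x; rewrite x_def chain_cat /=.
by case/andP => _ /and3P[_ /eqP].
Qed.

Lemma inBA_glue p : inBA s t Z p -> inBA sB tB ZB (glue_path p).
Proof.
case/andP => valid_p avoid_p; apply/andP; split; first exact: chain_glue.
apply/allP => z; rewrite mem_cat => /orP[/(allP avoid_p) //|].
case/mapP => -[a b]; rewrite mem_filter => /andP[/andP[_ ab_new] _] -> /=.
by apply: contra ab_new => /(chain_infix_pair valid_p) ->.
Qed.

Lemma chain_unglue a x :
  chain sB tB (sB a) (a :: x) ->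
  (forall b c, infix [:: b; c] (a :: x) -> tB b = sB c -> t b = s c) ->
  chain s t (s a) (a :: x).
Proof.
elim: x a => [|b x IHx] a /=; first by rewrite !eqxx.
case/and3P => _ /eqP ab chain_x no_new.
have -> : t a = s b by apply: no_new; [exact: (prefix_infix [:: a; b] x) | rewrite ab].
rewrite !eqxx /=; have /andP[_ //] : chain s t (s b) (b :: x).
apply: IHx => [|c d cd_in]; first by rewrite /= eqxx chain_x.
exact/no_new/(infix_trans cd_in (infix_cons _ _)).
Qed.

Lemma inBA_unglue q : (forall z, z \in Z -> 2 <= size z)%N ->
  inBA sB tB ZB q -> inBA s t Z (unglue_path q).
Proof.
case: q => v [|a x] Z_ge2; first by move=> _; apply: inBA_trivial.
case/andP=> /andP[/eqP /= <- chain_x] /allP avoid_q; apply/andP; split.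
  apply: chain_unglue => [|b c bc_in tbc]; first by rewrite /= eqxx.
  apply/eqP; apply: contraT => ntbc.
  by move: (avoid_q [:: b; c]); rewrite mem_ZB_pair tbc eqxx ntbc orbT bc_in => /(_ isT).
by apply/allP => z z_in; apply: avoid_q; rewrite mem_cat z_in.
Qed.

Lemma unglue_pathK q : valid sB tB q -> glue_path (unglue_path q) = q.
Proof.
case: q => v [|a x]; first by rewrite /glue_path /glueV valKd.
by case/andP => /eqP /= <-.
Qed.

Lemma glue_pathK p : valid s t p -> p != (w, [::]) -> unglue_path (glue_path p) = p.
Proof.
case: p => v [|a x]; last by case/andP => /eqP /= <-.
move=> _ neq_w; rewrite /unglue_path /= val_glueV.
by case: (eqVneq v w) neq_w => // ->; rewrite eqxx.
Qed.

Lemma unglue_path_w : unglue_path (glue_path (w, [::])) = (u, [::]).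
Proof. by rewrite /unglue_path /= val_glueV eqxx. Qed.

End Gluing.

Section CentreTrivialPaths.
Variables (V Ar : finType) (s t : Ar -> V) (Z : seq (seq Ar)) (K : fieldType).
Local Notation inBA := (inBA s t Z).
Implicit Types (c : qpath V Ar -> K).

Lemma pcentral_loop c r : pcentral s t Z c -> inBA r -> c r != 0 -> r.1 = pend t r.
Proof.
move=> c_central r_in; apply: contraNeq => /negbTE neq_ends.
have := c_central (pdelta (pend t r, [::])) r r_in.
by rewrite pconv_vertexl pconv_vertexr eqxx neq_ends mulr1 mul0r => ->.
Qed.

Lemma pcentral_end_trivial c r : pcentral s t Z c -> inBA r ->
  c (r.1, [::]) = c (pend t r, [::]).
Proof.
by move=> c_central r_in; rewrite -(pconv_deltar t c r) c_central // pconv_deltal.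
Qed.

Variable N : nat.
Hypothesis Z_ge2 : forall z, z \in Z -> (2 <= size z)%N.
Hypothesis fin_bound_N : fin_bound s t Z N.
Local Notation bs := (basis s t Z N).

(* The sum of the trivial paths at the vertices satisfying P is a central idempotent. *)
Lemma indecomposable_vertex_pred (P : pred V) (u w : V) : indecomposable s t Z K N ->
  (forall r, inBA r -> P r.1 = P (pend t r)) -> P u -> P w.
Proof.
move=> indec P_ends Pu; pose e (p : qpath V Ar) : K := ((p.2 == [::]) && P p.1)%:R.
have e_triv p : p.2 != [::] -> e p = 0 by rewrite /e => /negbTE ->.
have coord_e p : inBA p -> coord (row_of bs e) p = e p.
  by move=> p_in; rewrite coord_row_of ?uniq_basis ?mem_basis.
have e_central : central s t Z K N (row_of bs e).
  apply/centralE => //; apply: (pcentral_in coord_e) => d r r_in.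
  by rewrite pconv_trivl // pconv_trivr // mulrC /e /= P_ends.
have e_idem : mmul s t Z K N (row_of bs e) (row_of bs e) = row_of bs e.
  rewrite mmulE //; apply: eq_row_of => p; rewrite mem_basis // => p_in.
  rewrite (eq_pconv_in p_in coord_e coord_e) pconv_trivl //.
  by case: p {p_in} => v [|a x]; rewrite /e /= ?mulr0 // -natrM mulnb andbb.
have [e0|e1] := indec _ e_central e_idem.
  have := coord_e _ (inBA_trivial s t u Z_ge2).
  by rewrite e0 coord0 /e /= Pu => /eqP; rewrite eq_sym oner_eq0.
move: e1; rewrite munitE => /(row_of_inj (uniq_basis _ _ _ _))/(_ (w, [::])).
rewrite mem_basis ?inBA_trivial // /e /= => /(_ isT).
by case: (P w) => // /eqP; rewrite eq_sym oner_eq0.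
Qed.

Lemma pcentral_trivial_eq c u w : indecomposable s t Z K N -> pcentral s t Z c ->
  c (u, [::]) = c (w, [::]).
Proof.
move=> indec c_central; apply/esym/eqP.
apply: (@indecomposable_vertex_pred (fun v => c (v, [::]) == c (u, [::])) u w indec) => //.
by move=> r r_in; rewrite /= (pcentral_end_trivial c_central r_in).
Qed.

End CentreTrivialPaths.

Section NonSpecial.
Variables (V Ar : finType) (s t : Ar -> V) (Z : seq (seq Ar)) (u w : V).
Local Notation qp := (qpath V Ar).

Definition nonspecial (p : qp) : bool :=
  (((p.1 == u) && (pend t p == w)) || ((p.1 == w) && (pend t p == u)))
  && lmaximal s t Z p && rmaximal s t Z p.

Lemma count_nonspecial N : count nonspecial (basis s t Z N) = nsp s t Z N u w.
Proof. by []. Qed.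

Lemma nonspecial_ends p : u != w -> nonspecial p -> p.1 != pend t p.
Proof.
move=> neq_uw /andP[/andP[/orP[] /andP[/eqP -> /eqP ->] _] _] //.
by rewrite eq_sym.
Qed.

Lemma pconv_nonspecial_comm (K : fieldType) (c d : qp -> K) r :
  (forall p, c p != 0 -> nonspecial p) -> d (u, [::]) = d (w, [::]) -> inBA s t Z r ->
  pconv t c d r = pconv t d c r.
Proof.
move=> supp_c d_uw r_in.
have rmax p : c p != 0 -> rmaximal s t Z p by case/supp_c/andP.
have lmax p : c p != 0 -> lmaximal s t Z p by case/supp_c/andP => /andP[].
rewrite (pconv_rmaximal d rmax r_in) (pconv_lmaximal d lmax r_in).
have [->|/supp_c /andP[/andP[ends _] _]] := eqVneq (c r) 0; first by rewrite mulr0 mul0r.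
by rewrite mulrC; case/orP: ends => /andP[/eqP -> /eqP ->]; rewrite d_uw.
Qed.

End NonSpecial.

Section GluedCentre.
Variables (K : fieldType) (V Ar : finType) (s t : Ar -> V) (Z : seq (seq Ar)).
Variables (u w : V) (huw : u != w).
Hypothesis Z_ge2 : forall z, z \in Z -> (2 <= size z)%N.
Local Notation qA := (qpath V Ar).
Local Notation qB := (qpath {x : V | x != w} Ar).
Local Notation sB := (sB s huw).
Local Notation tB := (tB t huw).
Local Notation ZB := (ZB s t huw Z).
Local Notation inA := (inBA s t Z).
Local Notation glue := (glue_path huw).
Local Notation unglue := (@unglue_path V Ar s w).
Local Notation nonspecial := (nonspecial s t Z u w).
Local Notation compat d := (d (u, [::]) = d (w, [::])).
Implicit Types (c d : qA -> K).

Lemma unglue_glue_compat c p : compat c -> inA p -> c (unglue (glue p)) = c p.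
Proof.
move=> c_uw p_in; have [->|neq_w] := eqVneq p (w, [::]); first by rewrite unglue_path_w.
by case/andP: p_in => valid_p _; rewrite (glue_pathK _ valid_p).
Qed.

Lemma pcentral_compat c :
  (forall d r, compat d -> inA r -> pconv t c d r = pconv t d c r) ->
  (forall r, inA r -> pconv t c (pdelta (w, [::])) r = pconv t (pdelta (w, [::])) c r) ->
  pcentral s t Z c.
Proof.
move=> comm_compat comm_w d r r_in.
pose D p := if p == (w, [::]) then d (u, [::]) else d p.
have d_split p : d p = (d (w, [::]) - d (u, [::])) * pdelta (w, [::]) p + D p.
  by rewrite /D /pdelta; case: eqP => [->|]; rewrite ?mulr1 ?subrK ?mulr0 ?add0r.
rewrite (eq_pconv t (frefl c) d_split r) (eq_pconv t d_split (frefl c) r).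
rewrite pconvDl pconvDr comm_w // comm_compat // /D eqxx.
by case: eqP => // [[/eqP]]; rewrite (negbTE huw).
Qed.

Lemma pcentral_unglue c : compat c ->
  (forall d r, compat d -> inA r -> pconv t c d r = pconv t d c r) ->
  pcentral sB tB ZB (c \o unglue).
Proof.
move=> c_uw c_comm d' r' r'_in; have r_in := inBA_unglue Z_ge2 r'_in.
have c_glue p : inA p -> (c \o unglue \o glue) p = c p by exact: unglue_glue_compat.
have /andP[valid_r' _] := r'_in; rewrite -(unglue_pathK valid_r') !pconv_glue.
rewrite (eq_pconv_in r_in c_glue (fun _ _ => erefl)).
rewrite [RHS](eq_pconv_in r_in (fun _ _ => erefl) c_glue).
by apply: c_comm; rewrite // /glue_path /= glueV_uw.
Qed.

Lemma pcentral_unglue_central c : compat c -> pcentral s t Z c ->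
  pcentral sB tB ZB (c \o unglue).
Proof. by move=> c_uw c_central; apply: pcentral_unglue => // d r _; apply: c_central. Qed.

Lemma pcentral_unglue_nonspecial c : (forall p, c p != 0 -> nonspecial p) ->
  pcentral sB tB ZB (c \o unglue).
Proof.
move=> supp_c; have c_triv v : c (v, [::]) = 0.
  by apply/eqP; apply: contraTT isT => /supp_c /(nonspecial_ends huw); rewrite eqxx.
by apply: pcentral_unglue; rewrite ?c_triv // => d r; apply: pconv_nonspecial_comm.
Qed.

Section GluedCentralElement.
Variable c : qB -> K.
Hypothesis c_central : pcentral sB tB ZB c.
Local Notation y := (c \o glue).

Lemma glued_comm d r : compat d -> inA r -> pconv t y d r = pconv t d y r.
Proof.
move=> d_uw r_in.
have d_glue p : inA p -> d p = (d \o unglue \o glue) p.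
  by move=> p_in; rewrite /= unglue_glue_compat.
rewrite (eq_pconv_in r_in (fun _ _ => erefl) d_glue).
rewrite [RHS](eq_pconv_in r_in d_glue (fun _ _ => erefl)).
by rewrite -!pconv_glue c_central ?inBA_glue.
Qed.

Lemma glued_loop r : inA r -> y r != 0 -> glueV huw r.1 = glueV huw (pend t r).
Proof.
by move=> r_in /(pcentral_loop c_central (inBA_glue huw r_in)); rewrite pend_glue.
Qed.

Lemma glued_lmaximal r : inA r -> y r != 0 -> r.1 != pend t r -> lmaximal s t Z r.
Proof.
move=> r_in yr neq_ends; apply/forallP => a; apply/eqP.
case ar_def: (prodpath s t Z (arrow_path s a) r) => [ar|] //.
have [ar_in ar_cat ta] := prodpathP ar_def; have {}ta : t a = r.1 := ta.
have := glued_comm (d := parrow a) erefl ar_in.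
rewrite pconv_arrowr_eq0; last by move: neq_ends; rewrite ar_cat /pend /= ta eq_sym.
rewrite ar_cat /pcat /= pconv_arrowl_cons ta -surjective_pairing.
by move/eqP; rewrite eq_sym (negbTE yr).
Qed.

Lemma glued_rmaximal r : inA r -> y r != 0 -> r.1 != pend t r -> rmaximal s t Z r.
Proof.
move=> r_in yr neq_ends; apply/forallP => b; apply/eqP.
case rb_def: (prodpath s t Z r (arrow_path s b)) => [rb|] //.
have [rb_in rb_cat sb] := prodpathP rb_def; have {}sb : pend t r = s b := sb.
have := glued_comm (d := parrow b) erefl rb_in.
have /andP[valid_rb _] := rb_in.
rewrite [RHS](pconv_arrowl_eq0 _ valid_rb); last by rewrite rb_cat -sb.
rewrite rb_cat /pcat /= cats1 pconv_arrowr_rcons -surjective_pairing.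
by move/eqP; rewrite (negbTE yr).
Qed.

Lemma glued_nonspecial r : inA r -> y r != 0 -> r.1 != pend t r -> nonspecial r.
Proof.
move=> r_in yr neq_ends.
by rewrite /nonspecial glued_lmaximal ?glued_rmaximal ?glueV_eq ?glued_loop.
Qed.

Definition special_part (p : qA) : K := if nonspecial p then 0 else y p.

Lemma special_part_loop r : inA r -> special_part r != 0 -> r.1 = pend t r.
Proof.
rewrite /special_part => r_in; case: ifP => [_|special]; first by rewrite eqxx.
by move=> yr; apply/eqP; apply: contraFT special; apply: glued_nonspecial.
Qed.

Lemma pcentral_special_part : pcentral s t Z special_part.
Proof.
apply: pcentral_compat => [d r d_uw r_in|r r_in].
  pose nonspecial_part p := if nonspecial p then y p else 0.
  have split_y p : special_part p = -1 * nonspecial_part p + y p.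
    rewrite /special_part /nonspecial_part.
    by case: ifP; rewrite ?mulr0 ?add0r ?mulN1r ?addNr.
  rewrite (eq_pconv t split_y (frefl d) r) (eq_pconv t (frefl d) split_y r).
  have supp p : nonspecial_part p != 0 -> nonspecial p.
    by rewrite /nonspecial_part; case: ifP; rewrite ?eqxx.
  by rewrite pconvDl pconvDr glued_comm // (pconv_nonspecial_comm supp d_uw r_in).
rewrite pconv_vertexl pconv_vertexr mulrC.
by have [->|/(special_part_loop r_in) ->] := eqVneq (special_part r) 0; rewrite ?mulr0.
Qed.

End GluedCentralElement.

End GluedCentre.

Section CentreDimension.
Variables (k : fieldType) (V Ar : finType) (s t : Ar -> V) (Z : seq (seq Ar)).
Variables (u w : V) (huw : u != w) (N NB : nat).
Hypothesis Z_ge2 : forall z, z \in Z -> (2 <= size z)%N.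
Hypothesis fin_bound_A : fin_bound s t Z N.
Hypothesis fin_bound_B : fin_bound (sB s huw) (tB t huw) (ZB s t huw Z) NB.
Hypothesis indecomposable_A : indecomposable s t Z k N.
Local Notation sB := (sB s huw).
Local Notation tB := (tB t huw).
Local Notation ZB := (ZB s t huw Z).
Local Notation inA := (inBA s t Z).
Local Notation inB := (inBA sB tB ZB).
Local Notation glue := (glue_path huw).
Local Notation unglue := (@unglue_path V Ar s w).
Local Notation nonspecial := (nonspecial s t Z u w).
Local Notation bsA := (basis s t Z N).
Local Notation bsB := (basis sB tB ZB NB).
Local Notation dA := (size bsA).
Local Notation dB := (size bsB).
Local Notation gA := (tnth (in_tuple bsA)).
Local Notation gB := (tnth (in_tuple bsB)).
Local Notation CA := (kermx (lin1_mx (commf s t Z k N))).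
Local Notation CB := (kermx (lin1_mx (commf sB tB ZB k NB))).

Definition unglue_mx : 'M[k]_(dA, dB) := \matrix_(i, j) (gA i == unglue (gB j))%:R.
Definition glue_mx : 'M[k]_(dB, dA) := \matrix_(j, i) (gB j == glue (gA i))%:R.

Lemma unglue_mxE (x : 'rV[k]_dA) : x *m unglue_mx = row_of bsB (coord x \o unglue).
Proof. by apply/rowP => j; rewrite !mxE; apply: eq_bigr => i _; rewrite !mxE. Qed.

Lemma glue_mxE (x : 'rV[k]_dB) : x *m glue_mx = row_of bsA (coord x \o glue).
Proof. by apply/rowP => j; rewrite !mxE; apply: eq_bigr => i _; rewrite !mxE. Qed.

Lemma coord_unglue_mx (x : 'rV[k]_dA) q :
  inB q -> coord (x *m unglue_mx) q = coord x (unglue q).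
Proof. by move=> q_in; rewrite unglue_mxE coord_row_of ?uniq_basis ?mem_basis. Qed.

Lemma coord_glue_mx (x : 'rV[k]_dB) p : inA p -> coord (x *m glue_mx) p = coord x (glue p).
Proof. by move=> p_in; rewrite glue_mxE coord_row_of ?uniq_basis ?mem_basis. Qed.

Lemma glue_mxK (x : 'rV[k]_dB) : x *m glue_mx *m unglue_mx = x.
Proof.
apply: (eq_coord (uniq_basis _ _ _ _)) => q; rewrite mem_basis // => q_in.
have /andP[valid_q _] := q_in; have uq_in : inA (unglue q) by apply: inBA_unglue q_in.
by rewrite coord_unglue_mx // coord_glue_mx // (unglue_pathK valid_q).
Qed.

Lemma unglue_mxK (x : 'rV[k]_dA) : coord x (u, [::]) = coord x (w, [::]) ->
  x *m unglue_mx *m glue_mx = x.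
Proof.
move=> x_uw; apply: (eq_coord (uniq_basis _ _ _ _)) => p; rewrite mem_basis // => p_in.
by rewrite coord_glue_mx // coord_unglue_mx ?inBA_glue // (unglue_glue_compat _ x_uw p_in).
Qed.

Lemma row_free_glue_mx : row_free glue_mx.
Proof.
apply/row_freeP; exists unglue_mx; apply/row_matrixP => j.
by rewrite row_mul rowE glue_mxK row1.
Qed.

Lemma sub_centreA (x : 'rV[k]_dA) : (x <= CA)%MS <-> pcentral s t Z (coord x).
Proof. exact: iff_trans (sub_kermx_commf fin_bound_A x) (centralE fin_bound_A x). Qed.

Lemma sub_centreB (x : 'rV[k]_dB) : (x <= CB)%MS <-> pcentral sB tB ZB (coord x).
Proof. exact: iff_trans (sub_kermx_commf fin_bound_B x) (centralE fin_bound_B x). Qed.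

Lemma centreA_compat (x : 'rV[k]_dA) :
  (x <= CA)%MS -> coord x (u, [::]) = coord x (w, [::]).
Proof. by move/sub_centreA; apply: pcentral_trivial_eq indecomposable_A. Qed.

Lemma unglue_mx_centre (x : 'rV[k]_dA) : (x <= CA)%MS -> (x *m unglue_mx <= CB)%MS.
Proof.
move=> x_in; apply/sub_centreB/(pcentral_in (c' := coord x \o unglue)) => [q|].
  exact: coord_unglue_mx.
exact/pcentral_unglue_central/sub_centreA/x_in/centreA_compat.
Qed.

Definition nonspecial_idx := [seq i <- enum 'I_dA | nonspecial (gA i)].
Local Notation m := (size nonspecial_idx).
Local Notation gN := (tnth (in_tuple nonspecial_idx)).

Definition nonspecial_mx : 'M[k]_(m, dA) := \matrix_(a, i) (gN a == i)%:R.
Local Notation T := nonspecial_mx.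

Lemma size_nonspecial_idx : m = nsp s t Z N u w.
Proof.
have gA_enum : map gA (enum 'I_dA) = bsA := map_tnth_enum (in_tuple bsA).
by rewrite size_filter -count_nonspecial -[in RHS]gA_enum count_map.
Qed.

Lemma nonspecial_mx_trmx : T *m T^T = 1%:M.
Proof.
have gN_inj : injective gN by apply/tuple_uniqP/filter_uniq/enum_uniq.
apply/matrixP => a b; rewrite !mxE (bigD1 (gN a)) //= !mxE eqxx mul1r big1 ?addr0.
  by rewrite (inj_eq gN_inj) eq_sym.
by move=> i /negbTE neq_i; rewrite !mxE [gN a == i]eq_sym neq_i mul0r.
Qed.

Lemma rank_nonspecial_mx : \rank T = nsp s t Z N u w.
Proof.
apply/eqP; rewrite -size_nonspecial_idx eqn_leq rank_leq_row /=.
by have := mxrankM_maxl T T^T; rewrite nonspecial_mx_trmx mxrank1.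
Qed.

Lemma nonspecial_proj_entry j i : (T^T *m T) j i = ((j == i) && nonspecial (gA i))%:R.
Proof.
have gN_inj : injective gN by apply/tuple_uniqP/filter_uniq/enum_uniq.
rewrite !mxE; case ns_i: (nonspecial (gA i)); last first.
  rewrite andbF big1 // => a _; rewrite !mxE.
  have [gNa|_] := eqVneq (gN a) i; rewrite ?mulr0 //.
  by move: (mem_tnth a (in_tuple nonspecial_idx)); rewrite /= gNa mem_filter /= ns_i.
have : i \in nonspecial_idx by rewrite mem_filter ns_i mem_enum.
case/(tnthP (in_tuple nonspecial_idx)) => a gNa.
rewrite (bigD1 a) //= big1 ?addr0 => [|b neq_ba].
  by rewrite !mxE -gNa eqxx mulr1 andbT eq_sym.
by rewrite !mxE gNa (inj_eq gN_inj) (negbTE neq_ba) mulr0.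
Qed.

Lemma coord_nonspecial_proj (y : 'rV[k]_dA) p : inA p ->
  coord (y *m (T^T *m T)) p = (nonspecial p)%:R * coord y p.
Proof.
rewrite -(mem_basis fin_bound_A) => /(tnthP (in_tuple bsA)) [i ->].
rewrite !coord_tnth ?uniq_basis // mxE (bigD1 i) //= big1 ?addr0 => [|j neq_ji].
  by rewrite nonspecial_proj_entry eqxx mulrC.
by rewrite nonspecial_proj_entry (negbTE neq_ji) mulr0.
Qed.

Lemma sub_nonspecial_mx (x : 'rV[k]_dA) :
  (x <= T)%MS -> forall p, coord x p != 0 -> nonspecial p.
Proof.
case/submxP => z -> p; have [p_in|p_out] := boolP (inA p); last first.
  by rewrite coord_notin ?eqxx // mem_basis.
have -> : z *m T = z *m T *m (T^T *m T).
  by rewrite mulmxA -(mulmxA z) nonspecial_mx_trmx mulmx1.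
by rewrite coord_nonspecial_proj //; case: (nonspecial p); rewrite ?mul0r ?eqxx.
Qed.

Lemma centreA_nonspecial_disjoint : (CA :&: T)%MS = 0.
Proof.
apply/eqP; rewrite -submx0; apply/row_subP => i; set x := row i _.
have /andP[x_cent x_ns] : (x <= CA)%MS && (x <= T)%MS by rewrite -sub_capmx row_sub.
suff -> : x = 0 by apply: sub0mx.
apply: (eq_coord (uniq_basis _ _ _ _)) => p; rewrite mem_basis // coord0 => p_in.
apply/eqP; apply: contraT => x_p.
have /(nonspecial_ends huw) := sub_nonspecial_mx x_ns x_p.
by rewrite (pcentral_loop (proj1 (sub_centreA x) x_cent) p_in x_p) eqxx.
Qed.

Lemma centreA_sub : (CA <= CB *m glue_mx)%MS.
Proof.
apply/row_subP => i; set x := row i CA; have x_in : (x <= CA)%MS by apply: row_sub.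
by rewrite -(unglue_mxK (centreA_compat x_in)) submxMr // unglue_mx_centre.
Qed.

Lemma nonspecial_mx_sub : (T <= CB *m glue_mx)%MS.
Proof.
apply/row_subP => a; set x := row a T.
have supp_x : forall p, coord x p != 0 -> nonspecial p by apply/sub_nonspecial_mx/row_sub.
have x_triv v : coord x (v, [::]) = 0.
  by apply/eqP; apply: contraTT isT => /supp_x /(nonspecial_ends huw); rewrite eqxx.
rewrite -(unglue_mxK (etrans (x_triv u) (esym (x_triv w)))) submxMr //.
apply/sub_centreB/(pcentral_in (c' := coord x \o unglue)) => [q|].
  exact: coord_unglue_mx.
exact: pcentral_unglue_nonspecial.
Qed.

Lemma centreB_glue_sub : (CB *m glue_mx <= CA + T)%MS.
Proof.
apply/row_subP => j; rewrite row_mul; set x := row j CB.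
have /sub_centreB x_cent : (x <= CB)%MS by apply: row_sub.
set y := x *m glue_mx; rewrite -(subrK (y *m (T^T *m T)) y).
apply: addmx_sub_adds; last by rewrite mulmxA submxMl.
apply/sub_centreA/(pcentral_in (c' := special_part s t Z huw (coord x))).
  move=> p p_in; rewrite coordB coord_nonspecial_proj // coord_glue_mx // /special_part.
  by case: (nonspecial p); rewrite ?mul1r ?subrr ?mul0r ?subr0.
exact: pcentral_special_part.
Qed.

Lemma rank_centreB : \rank CB = (\rank CA + nsp s t Z N u w)%N.
Proof.
rewrite -(mxrankMfree CB row_free_glue_mx) -rank_nonspecial_mx.
rewrite -(mxrank_disjoint_sum centreA_nonspecial_disjoint); apply/eqmx_rank/andP; split.
  exact: centreB_glue_sub.
by rewrite addsmx_sub centreA_sub nonspecial_mx_sub.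
Qed.

Lemma unglue_mx_mmul (x y : 'rV[k]_dA) : (x <= CA)%MS -> (y <= CA)%MS ->
  mmul s t Z k N x y *m unglue_mx = mmul sB tB ZB k NB (x *m unglue_mx) (y *m unglue_mx).
Proof.
move=> x_in y_in; rewrite (mmulE fin_bound_B) unglue_mxE.
apply: eq_row_of => q; rewrite mem_basis // => q_in.
have /andP[valid_q _] := q_in; have uq_in : inA (unglue q) by apply: inBA_unglue q_in.
rewrite /= (mmulE fin_bound_A) coord_row_of ?uniq_basis ?(mem_basis fin_bound_A) //.
rewrite -{2}(unglue_pathK valid_q) pconv_glue; apply: (eq_pconv_in uq_in) => p p_in /=.
  rewrite coord_unglue_mx ?inBA_glue //.
  by rewrite (unglue_glue_compat _ (centreA_compat x_in) p_in).
rewrite coord_unglue_mx ?inBA_glue //.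
by rewrite (unglue_glue_compat _ (centreA_compat y_in) p_in).
Qed.

Lemma unglue_mx_munit : munit s t Z k N *m unglue_mx = munit sB tB ZB k NB.
Proof.
rewrite unglue_mxE !munitE; apply: eq_row_of => q; rewrite mem_basis // => q_in.
have uq_in : inA (unglue q) by apply: inBA_unglue q_in.
rewrite /= coord_row_of ?uniq_basis ?(mem_basis fin_bound_A) //.
by case: q {q_in uq_in} => v [|a x].
Qed.

Lemma centre_unglue_mono : centre_alg_mono (mmul s t Z k N) (munit s t Z k N)
  (mmul sB tB ZB k NB) (munit sB tB ZB k NB) (mulmx^~ unglue_mx).
Proof.
have centA x : central s t Z k N x -> (x <= CA)%MS := (sub_kermx_commf fin_bound_A x).2.
split=> [x /centA x_in|a x y _ _|x y /centA x_in /centA y_in||x y /centA x_in /centA y_in].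
- exact/(sub_kermx_commf fin_bound_B)/unglue_mx_centre.
- by rewrite mulmxDl scalemxAl.
- exact: unglue_mx_mmul.
- exact: unglue_mx_munit.
by move/(congr1 (mulmx^~ glue_mx)); rewrite /= !unglue_mxK ?centreA_compat.
Qed.

End CentreDimension.

Theorem proposition6p3 (k : fieldType) (V Ar : finType) (s t : Ar -> V)
  (Z : seq (seq Ar)) (u w : V) (huw : u != w) (N NB : nat) :
  relation_set s t Z ->
  fin_bound s t Z N ->
  fin_bound (sB s huw) (tB t huw) (ZB s t huw Z) NB ->
  indecomposable s t Z k N ->
  non_isolated s t u -> non_isolated s t w ->
  (exists f, centre_alg_mono (mmul s t Z k N) (munit s t Z k N)
               (mmul (sB s huw) (tB t huw) (ZB s t huw Z) k NB)
               (munit (sB s huw) (tB t huw) (ZB s t huw Z) k NB) f)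
  /\ centre_dim (sB s huw) (tB t huw) (ZB s t huw Z) k NB
     = (centre_dim s t Z k N + nsp s t Z N u w)%N.
Proof.
move=> [_ [Z_ge2 _]] fin_bound_A fin_bound_B indec _ _.
have {}Z_ge2 z : z \in Z -> (2 <= size z)%N by case/Z_ge2.
split; first by eexists; exact: centre_unglue_mono.
exact: rank_centreB.
Qed.
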